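(* Every finite graph $G$ with pathwidth $p$ is homomorphic to an interval graph $H$ with $\omega(H)\leq p+1$ and $\mathrm{FF}(G)\leq \mathrm{FF}(H)$.
   Context: A path decomposition of a graph $G$ is a sequence $B_1,\dots,B_m$ of vertex subsets such that each vertex lies in a nonempty set of consecutive $B_i$'s and each edge has both endpoints in some $B_i$; its width is $\max_i |B_i|-1$, and the pathwidth of $G$ is the minimum width of a path decomposition. An interval graph is the intersection graph of a finite set of closed real intervals. $\omega(H)$ is the maximum size of a clique in $H$. A First-Fit coloring of a graph $G$ is a proper coloring of the vertices with positive integers such that every vertex colored $i\geq 2$ has a neighbor colored $j$ for every $j\in\{1,\dots,i-1\}$; $\mathrm{FF}(G)$ is the maximum number of colors used in a First-Fit coloring of $G$. A homomorphism from $G$ to $H$ is a map $f:V(G)\to V(H)$ with $f(u)f(v)\in E(H)$ for every edge $uv\in E(G)$. *)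

From HB Require Import structures.
From mathcomp Require Import all_boot all_order all_algebra.
From mathcomp Require Import boolp reals.
Set Implicit Arguments. Unset Strict Implicit. Unset Printing Implicit Defensive.
Import Order.TTheory GRing.Theory Num.Theory.

Definition simple_graph (T : finType) (e : rel T) : Prop :=
  symmetric e /\ irreflexive e.

Definition path_decomposition (T : finType) (e : rel T) (s : seq {set T}) : Prop :=
  (forall v : T, exists i j : nat,
      [/\ i <= j, j < size s &
          forall k : nat, k < size s -> (v \in nth set0 s k) = (i <= k <= j)]) /\
  (forall u v : T, e u v -> exists2 B, B \in s & (u \in B) && (v \in B)).

Definition pd_width (T : finType) (s : seq {set T}) : nat :=
  (\max_(B <- s) #|B|) - 1.

Definition is_pathwidth (T : finType) (e : rel T) (p : nat) : Prop :=
  (exists2 s, path_decomposition e s & pd_width s = p) /\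
  (forall s, path_decomposition e s -> p <= pd_width s).

(* Interval graph: intersection graph of closed real intervals [l u, r u]. *)
Definition interval_graph (R : realType) (U : finType) (h : rel U) : Prop :=
  exists l r : U -> R,
    (forall u, (l u <= r u)%R) /\
    (forall u v, h u v = (u != v) && ((l u <= r v)%R && (l v <= r u)%R)).

Definition is_clique (U : finType) (h : rel U) (K : {set U}) : bool :=
  [forall x in K, forall y in K, (x != y) ==> h x y].

Definition clique_number (U : finType) (h : rel U) : nat :=
  \max_(K : {set U} | is_clique h K) #|K|.

Definition first_fit (T : finType) (e : rel T) (c : T -> nat) : Prop :=
  (forall u v, e u v -> c u != c v) /\
  (forall v, 0 < c v) /\
  (forall v j, 1 <= j < c v -> exists u, e v u /\ c u = j).

Definition num_colors (T : finType) (c : T -> nat) : nat :=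
  size (undup [seq c v | v <- enum T]).

(* FF(G): maximum number of colors used by a First-Fit coloring.  The number
   of colors used is at most #|T|, so the maximum ranges over k <= #|T|. *)
Definition FF (T : finType) (e : rel T) : nat :=
  \max_(k < #|T|.+1 | `[< exists c : T -> nat, first_fit e c /\ num_colors c = k >]) k.

Definition graph_hom (T U : finType) (e : rel T) (h : rel U) (f : T -> U) : Prop :=
  forall u v, e u v -> h (f u) (f v).

From mathcomp Require Import all_boot all_order all_algebra.
From mathcomp Require Import boolp reals.
From mathcomp Require Import zify.
Set Implicit Arguments. Unset Strict Implicit. Unset Printing Implicit Defensive.
Import Num.Theory.

(* Fix a path decomposition B_0, ..., B_(m-1) and a proper coloring c of G.
   For each color i, the indices t with some vertex of color i in B_t split
   into maximal runs of consecutive integers; the runs, with their intervals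
   of indices, are the vertices of H, and v is sent to the run of color c v
   through its bags (which are consecutive).  Pairwise intersecting intervals
   share a point t (Helly), and runs through t have distinct colors all
   present in B_t, so cliques of H have at most |B_t| vertices.  A run is
   adjacent to the runs of its vertices' neighbours, so a First-Fit coloring
   of G induces, color by color, one of H with as many colors. *)

Section MaximalRuns.

Variable P : pred nat.

(* the least a <= t such that P holds on [a, t) *)
Fixpoint run_start t := if t is t'.+1 then if P t' then run_start t' else t else 0.

Lemma run_start_le t : run_start t <= t.
Proof. by elim: t => //= t IH; case: (P t); first exact: leqW. Qed.

Lemma run_start_cover t x : run_start t <= x < t -> P x.
Proof.
elim: t => [|t IH] /=; first lia.
case Pt: (P t) => le_x; last lia.
have [-> // | ne_xt] := eqVneq x t; apply: IH; lia.
Qed.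

Lemma run_start_mem t : P t -> P (run_start t).
Proof.
move=> Pt; have := run_start_le t; rewrite leq_eqVlt => /orP[/eqP -> //|lt_st].
by apply: (@run_start_cover t); rewrite leqnn.
Qed.

Lemma run_start_idem t : run_start (run_start t) = run_start t.
Proof. by elim: t => //= t IH; case Pt: (P t) => //=; rewrite Pt. Qed.

Lemma run_start_const t1 t2 :
  t1 <= t2 -> (forall x, t1 <= x < t2 -> P x) -> run_start t2 = run_start t1.
Proof.
elim: t2 => [|t2 IH] le12 cov12; first by move: le12; rewrite leqn0 => /eqP ->.
have [-> // | ne12] := eqVneq t1 t2.+1.
rewrite /= cov12 ?IH //; try lia.
by move=> x lt_x; apply: cov12; lia.
Qed.

Variable M : nat.
Hypothesis P_lt : forall t, P t -> t < M.

Definition run_end a := \max_(b < M | P b && (run_start b == a)) b.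

Lemma mem_run a t :
  P a -> run_start a = a -> (P t && (run_start t == a)) = (a <= t <= run_end a).
Proof.
move=> Pa start_a; apply/idP/idP.
- case/andP=> Pt /eqP <-; rewrite run_start_le /=.
  apply: (@leq_bigmax_cond _ _ (fun b : 'I_M => nat_of_ord b) (Ordinal (P_lt Pt))).
  by rewrite /= Pt eqxx.
- rewrite /run_end (bigmax_eq_arg (Ordinal (P_lt Pa))) /=; last by rewrite Pa start_a eqxx.
  case: arg_maxnP => [|b /andP[Pb /eqP start_b] _]; first by rewrite /= Pa start_a eqxx.
  case/andP=> le_at le_tb.
  have cover_ab x : a <= x <= b -> P x.
    move=> le_x; have [-> // | ne_xb] := eqVneq x b.
    by apply: (@run_start_cover b); rewrite start_b; lia.
  rewrite cover_ab ?le_at //= (run_start_const le_at) ?start_a //.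
  by move=> x ?; apply: cover_ab; lia.
Qed.

End MaximalRuns.

Lemma clique_adj (U : finType) (h : rel U) (K : {set U}) x y :
  is_clique h K -> x \in K -> y \in K -> x != y -> h x y.
Proof.
move=> /forallP /(_ x) /implyP clique_x Kx Ky.
by move/forallP/(_ y)/implyP/(_ Ky)/implyP: (clique_x Kx).
Qed.

Lemma eq_num_colors (T U : finType) (c : T -> nat) (d : U -> nat) :
  (forall v, exists u, d u = c v) -> (forall u, exists v, c v = d u) ->
  num_colors d = num_colors c.
Proof.
move=> dc cd; apply/perm_size/uniq_perm; rewrite ?undup_uniq // => i.
rewrite !mem_undup; apply/mapP/mapP => [[u _ ->] | [v _ ->]].
  by have [v <-] := cd u; exists v; rewrite ?mem_enum.
by have [u <-] := dc v; exists u; rewrite ?mem_enum.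
Qed.

Section RunGraph.

Variables (T : finType) (e : rel T) (s : seq {set T}) (c : T -> nat).

Lemma mem_bag_lt v t : v \in nth set0 s t -> t < size s.
Proof. by case: ltnP => // le_st; rewrite nth_default // in_set0. Qed.

Definition color_in_bag (i : nat) : pred nat :=
  fun t => [exists v in nth set0 s t, c v == i].

Lemma color_in_bag_mem v t : v \in nth set0 s t -> color_in_bag (c v) t.
Proof. by move=> in_t; apply/existsP; exists v; rewrite in_t eqxx. Qed.

Lemma color_in_bag_lt i t : color_in_bag i t -> t < size s.
Proof. by case/existsP=> v /andP[/mem_bag_lt]. Qed.

Local Notation K := (\max_v c v).+1.

(* (i, a) stands for the maximal run of color i whose first index is a *)
Definition run_vertex := {x : 'I_K * 'I_(size s) |
  color_in_bag x.1 x.2 && (run_start (color_in_bag x.1) x.2 == x.2)}.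

Definition run_color (u : run_vertex) : nat := (val u).1.
Definition run_left (u : run_vertex) : nat := (val u).2.
Definition run_right (u : run_vertex) : nat :=
  run_end (color_in_bag (run_color u)) (size s) (run_left u).
Definition run_covers (u : run_vertex) t := run_left u <= t <= run_right u.
Definition run_adj : rel run_vertex := fun u w =>
  (u != w) && ((run_left u <= run_right w) && (run_left w <= run_right u)).

Lemma run_coversE u t : run_covers u t =
  color_in_bag (run_color u) t && (run_start (color_in_bag (run_color u)) t == run_left u).
Proof.
case/andP: (valP u) => in_left /eqP start_left.
by rewrite /run_covers /run_right (mem_run (@color_in_bag_lt _)).
Qed.

Lemma run_covers_left u : run_covers u (run_left u).
Proof. by case/andP: (valP u) => in_left start_left; rewrite run_coversE in_left. Qed.

Lemma run_covers_lt u t : run_covers u t -> t < size s.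
Proof. by rewrite run_coversE => /andP[/color_in_bag_lt]. Qed.

Lemma run_color_inj u w t :
  run_color u = run_color w -> run_covers u t -> run_covers w t -> u = w.
Proof.
move=> eq_color; rewrite !run_coversE -eq_color => /andP[_ /eqP start_u] /andP[_ /eqP].
rewrite start_u; move: u w eq_color {start_u} => [[i a] ?] [[j b] ?].
rewrite /run_color /run_left /= => ij ab.
by apply: val_inj; congr pair; apply: val_inj.
Qed.

Lemma run_adj_covers u w t :
  u != w -> run_covers u t -> run_covers w t -> run_adj u w.
Proof. by rewrite /run_covers /run_adj => -> /andP[? ?] /andP[? ?]; apply/andP; split; lia. Qed.

Lemma run_interval_graph (R : realType) : interval_graph R run_adj.
Proof.
exists (fun u => (run_left u)%:R%R), (fun u => (run_right u)%:R%R); split=> [u|u w].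
  by rewrite ler_nat; case/andP: (run_covers_left u).
by rewrite !ler_nat.
Qed.

Hypothesis s_pd : path_decomposition e s.

Lemma bag_consecutive v t1 t2 x :
  v \in nth set0 s t1 -> v \in nth set0 s t2 -> t1 <= x <= t2 -> v \in nth set0 s x.
Proof.
move=> in1 in2 le_x; have [i [j [_ _ bags_v]]] := s_pd.1 v.
have lt1 := mem_bag_lt in1; have lt2 := mem_bag_lt in2.
rewrite (bags_v _ lt1) in in1; rewrite (bags_v _ lt2) in in2; rewrite bags_v; lia.
Qed.

Lemma run_start_bags v t1 t2 :
  v \in nth set0 s t1 -> v \in nth set0 s t2 ->
  run_start (color_in_bag (c v)) t1 = run_start (color_in_bag (c v)) t2.
Proof.
wlog le12 : t1 t2 / t1 <= t2 => [wlog_le | in1 in2].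
  by case: (leqP t1 t2) => [|/ltnW] le12 in1 in2; last symmetry; apply: wlog_le.
apply/esym/(run_start_const le12) => x le_x.
by apply/color_in_bag_mem/(bag_consecutive in1 in2); lia.
Qed.

Lemma exists_bag v : exists t, v \in nth set0 s t.
Proof.
have [i [j [le_ij lt_j bags_v]]] := s_pd.1 v.
by exists i; rewrite bags_v ?leqnn ?le_ij //; lia.
Qed.

Definition bag_of v : nat := xchoose (exists_bag v).

Definition run_of_start v := run_start (color_in_bag (c v)) (bag_of v).

Lemma run_of_start_lt v : run_of_start v < size s.
Proof. exact: leq_ltn_trans (run_start_le _ _) (mem_bag_lt (xchooseP (exists_bag v))). Qed.

Lemma color_lt v : c v < K.
Proof. by rewrite ltnS; apply: leq_bigmax. Qed.

Definition vertex_run_val v : 'I_K * 'I_(size s) :=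
  (inord (c v), Ordinal (run_of_start_lt v)).

Lemma vertex_run_subproof v :
  let x := vertex_run_val v in
  color_in_bag x.1 x.2 && (run_start (color_in_bag x.1) x.2 == x.2).
Proof.
rewrite /= inordK ?color_lt // /run_of_start run_start_idem eqxx andbT.
exact/run_start_mem/color_in_bag_mem/(xchooseP (exists_bag v)).
Qed.

Definition vertex_run v : run_vertex := Sub (vertex_run_val v) (vertex_run_subproof v).

Lemma vertex_run_color v : run_color (vertex_run v) = c v.
Proof. by rewrite /run_color SubK /= inordK ?color_lt. Qed.

Lemma vertex_run_covers v t : v \in nth set0 s t -> run_covers (vertex_run v) t.
Proof.
move=> in_t; rewrite run_coversE vertex_run_color /run_left SubK /=.
rewrite (run_start_bags in_t (xchooseP (exists_bag v))) eqxx andbT.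
exact: color_in_bag_mem.
Qed.

Lemma vertex_run_surj u : exists2 v, v \in nth set0 s (run_left u) & vertex_run v = u.
Proof.
case/andP: (valP u) => /existsP [v /andP[in_left /eqP cv]] _; exists v => //.
apply: (run_color_inj _ (vertex_run_covers in_left) (run_covers_left u)).
by rewrite vertex_run_color.
Qed.

Lemma vertex_run_hom :
  (forall u v, e u v -> c u != c v) -> graph_hom e run_adj vertex_run.
Proof.
move=> c_proper u v /[dup] e_uv /s_pd.2 [B /(nth_index set0) <- /andP[in_u in_v]].
apply: (run_adj_covers _ (vertex_run_covers in_u) (vertex_run_covers in_v)).
by apply: contra_neq (c_proper _ _ e_uv) => eq_uv; rewrite -!vertex_run_color eq_uv.
Qed.

Lemma run_clique_card (Q : {set run_vertex}) :
  is_clique run_adj Q -> #|Q| <= \max_(B <- s) #|B|.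
Proof.
move=> clique_Q; have [-> | [u0 Q_u0]] := set_0Vmem Q; first by rewrite cards0.
pose t := \max_(w in Q) run_left w.
have covers_t u : u \in Q -> run_covers u t.
  move=> Q_u; rewrite /run_covers (leq_bigmax_cond _ Q_u) /=.
  apply/bigmax_leqP => w Q_w; have [-> | ne_wu] := eqVneq w u.
    by case/andP: (run_covers_left u).
  by case/and3P: (clique_adj clique_Q Q_w Q_u ne_wu).
have color_inj : {in Q &, injective (fun u : run_vertex => (val u).1)}.
  move=> u w Q_u Q_w /= eq_uw.
  exact: (run_color_inj (congr1 val eq_uw) (covers_t u Q_u) (covers_t w Q_w)).
rewrite -(card_in_imset color_inj).
apply: (@leq_trans #|[set (inord (c v) : 'I_K) | v in nth set0 s t]|).
  apply/subset_leq_card/subsetP => _ /imsetP [u Q_u ->].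
  have := covers_t u Q_u; rewrite run_coversE => /andP[/existsP [v /andP[in_v /eqP cv]] _].
  by apply/imsetP; exists v => //; rewrite cv inord_val.
apply: leq_trans (leq_imset_card _ _) (leq_bigmax_seq _ _ _) => //.
exact/mem_nth/(run_covers_lt (covers_t u0 Q_u0)).
Qed.

Lemma clique_number_run : clique_number run_adj <= \max_(B <- s) #|B|.
Proof. by apply/bigmax_leqP => Q; apply: run_clique_card. Qed.

Lemma num_colors_run : num_colors run_color = num_colors c.
Proof.
apply: eq_num_colors => [v | u]; first by exists (vertex_run v); apply: vertex_run_color.
by have [v _ <-] := vertex_run_surj u; exists v; rewrite vertex_run_color.
Qed.

Lemma first_fit_run : first_fit e c -> first_fit run_adj run_color.
Proof.
case=> c_proper [c_pos c_ff]; split; [|split].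
- move=> u w /and3P [ne_uw le_uw le_wu]; apply: contra_neq ne_uw => eq_color.
  have := run_covers_left u; have := run_covers_left w; rewrite /run_covers => cov_w cov_u.
  by apply: (run_color_inj (t := maxn (run_left u) (run_left w)) eq_color);
    rewrite /run_covers; lia.
- by move=> u; have [v _ <-] := vertex_run_surj u; rewrite vertex_run_color.
- move=> u j; have [v _ <-] := vertex_run_surj u; rewrite vertex_run_color => lt_j.
  have [w [e_vw <-]] := c_ff v j lt_j.
  by exists (vertex_run w); rewrite vertex_run_color; split=> //; apply: vertex_run_hom.
Qed.

End RunGraph.

Lemma num_colors_le (T : finType) (c : T -> nat) : num_colors c <= #|T|.
Proof. by rewrite /num_colors cardE; apply: leq_trans (size_undup _) _; rewrite size_map. Qed.

Lemma leq_FF (T : finType) (e : rel T) c : first_fit e c -> num_colors c <= FF e.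
Proof.
move=> c_ff; have lt_num : num_colors c < #|T|.+1 by rewrite ltnS num_colors_le.
apply: (@leq_bigmax_cond _ _ (fun k : 'I_#|T|.+1 => nat_of_ord k) (Ordinal lt_num)).
by apply/asboolP; exists c.
Qed.

Lemma FF_attained (T : finType) (e : rel T) :
  0 < FF e -> exists c, first_fit e c /\ num_colors c = FF e.
Proof.
rewrite /FF; case: (pickP (fun k : 'I_#|T|.+1 =>
    `[< exists c : T -> nat, first_fit e c /\ num_colors c = k >])) => [k0 k0_real | none].
  by rewrite (bigmax_eq_arg k0) //; case: arg_maxnP => // k /asboolP.
by rewrite big_pred0.
Qed.

Theorem theorem3 (R : realType) (T : finType) (e : rel T) (p : nat) :
  simple_graph e -> is_pathwidth e p ->
  exists (U : finType) (h : rel U) (f : T -> U),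
    [/\ interval_graph R h, graph_hom e h f,
        clique_number h <= p.+1 & FF e <= FF h].
Proof.
move=> [_ e_irr] [[s s_pd s_width] _].
have [c c_proper c_FF] : exists2 c : T -> nat, (forall u v, e u v -> c u != c v)
    & 0 < FF e -> first_fit e c /\ num_colors c = FF e.
  case: (posnP (FF e)) => [-> | /FF_attained [c [c_ff c_num]]]; last first.
    by exists c => //; case: c_ff.
  exists (fun v => enum_rank v : nat) => // u v.
  by apply: contraTneq => /val_inj/enum_rank_inj ->; rewrite e_irr.
exists (run_vertex s c), (run_adj (c := c)), (vertex_run c s_pd); split.
- exact: run_interval_graph.
- exact: vertex_run_hom.
- by apply: leq_trans (clique_number_run s c) _; rewrite -s_width /pd_width; lia.
- case: (posnP (FF e)) => [-> // | /c_FF [c_ff <-]].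
  by rewrite -(num_colors_run c s_pd); apply: leq_FF; apply: (first_fit_run s_pd).
Qed.
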